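(* Let $p$ be a prime, $C\subseteq\mathbb{F}_p^{2n}$ a symplectic self-orthogonal code with stabilizer code $Q(C)\subseteq\mathbb{C}^{p^n}$, and let $\emptyset\neq I\subsetneq J\subsetneq\{1,\dots,n\}$. If $Q(C)$ is $(I,J)$-locally recoverable, then \[\sigma_I\left[\pi_J\left(C^{\perp_s}\right)\right]=\sigma_I(C).\]
   Context: Vectors of $\mathbb{F}_p^{2n}$ are written $(\mathbf a|\mathbf b)$, coordinate pairs $(a_j,b_j)$ indexed by $j\in\{1,\dots,n\}$. Symplectic form: $(\mathbf a|\mathbf b)\cdot_s(\mathbf c|\mathbf d)=\mathbf a\cdot\mathbf d-\mathbf b\cdot\mathbf c$; $C^{\perp_s}$ is the dual; $C$ is symplectic self-orthogonal if $C\subseteq C^{\perp_s}$. For $R\subseteq\{1,\dots,n\}$: $\pi_R(\mathbf a|\mathbf b)=(a_j|b_j)_{j\in R}$, puncturing $\pi_R(D)=\{\pi_R(\mathbf y):\mathbf y\in D\}$, shortening $\sigma_R(D)=\{\pi_R(\mathbf y):\mathbf y=(\mathbf a|\mathbf b)\in D,\ \mathrm{supp}(\mathbf a)\cup\mathrm{supp}(\mathbf b)\subseteq R\}$; the shortening at $I$ of a code with coordinate pairs indexed by $J\supseteq I$ is defined the same way. Quantum setting: $\xi=e^{2\pi\iota/p}$, $X(a)|x\rangle=|x+a\rangle$, $Z(b)|x\rangle=\xi^{bx}|x\rangle$ on $\mathbb C^p$, $E_{(\mathbf a,\mathbf b)}=\bigotimes_jX(a_j)Z(b_j)$. $Q(C)$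 is the common eigenspace $\{v:Ev=\lambda(E)v\ \forall E\in S\}$, $S$ the commutative group generated by scalars $\xi^\ell\mathcal I$ and $E_{\mathbf y}$, $\mathbf y\in C$, $\lambda$ a character of $S$ with $\lambda(\xi\mathcal I)=\xi$. Let $\Gamma(\rho)=p^{-2}\sum_{a,b}X(a)Z(b)\rho(X(a)Z(b))^\dagger$, and $\Gamma^I$ apply $\Gamma$ to the qudits indexed by $I$ and the identity elsewhere. For $\emptyset\ne I\subsetneq J$, a code $Q$ is $(I,J)$-locally recoverable if there is a trace-preserving quantum operation $\mathcal R$ acting only on the qudits indexed by $J$ (identity on the others) with $\mathcal R\circ\Gamma^I(|\varphi\rangle\langle\varphi|)=|\varphi\rangle\langle\varphi|$ for all $|\varphi\rangle\in Q$. *)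

From HB Require Import structures.
From mathcomp Require Import all_boot all_order all_algebra.
Set Implicit Arguments. Unset Strict Implicit. Unset Printing Implicit Defensive.
Import Order.TTheory GRing.Theory Num.Theory.
Local Open Scope ring_scope.

(* F_p^n, coordinates indexed by 'I_n = {1..n} (shifted to {0..n-1}) *)
Notation fvec p n := {ffun 'I_n -> 'F_p}.
Notation svec p n := (fvec p n * fvec p n)%type.

Section Codes.
Variables (p n : nat).
Local Notation fvec := (fvec p n).
Local Notation svec := (svec p n).

Definition szero : svec := ([ffun=> 0], [ffun=> 0]).
Definition sadd (u v : svec) : svec :=
  ([ffun j => u.1 j + v.1 j], [ffun j => u.2 j + v.2 j]).
Definition sscale (c : 'F_p) (u : svec) : svec :=
  ([ffun j => c * u.1 j], [ffun j => c * u.2 j]).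

Definition linear_code (C : {set svec}) : Prop :=
  [/\ szero \in C,
      forall u v, u \in C -> v \in C -> sadd u v \in C &
      forall c u, u \in C -> sscale c u \in C].

Definition symp (u v : svec) : 'F_p :=
  \sum_j (u.1 j * v.2 j - u.2 j * v.1 j).

Definition symp_dual (C : {set svec}) : {set svec} :=
  [set v | [forall u in C, symp u v == 0]].

Definition symp_self_orth (C : {set svec}) : Prop := C \subset symp_dual C.

Definition ssupp (y : svec) : {set 'I_n} :=
  [set j | (y.1 j != 0) || (y.2 j != 0)].

(* pi_R: a vector indexed by R is represented by the vector of F_p^{2n}
   that agrees with it on R and is zero off R (canonical identification). *)
Definition sproj (R : {set 'I_n}) (y : svec) : svec :=
  ([ffun j => if j \in R then y.1 j else 0],
   [ffun j => if j \in R then y.2 j else 0]).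

Definition code_puncture (R : {set 'I_n}) (D : {set svec}) : {set svec} :=
  [set sproj R y | y in D].

Definition code_shorten (R : {set 'I_n}) (D : {set svec}) : {set svec} :=
  [set sproj R y | y in [set y in D | ssupp y \subset R]].

End Codes.

Notation qvec K p n := {ffun fvec p n -> K}.
Notation qop K p n := {ffun (fvec p n * fvec p n)%type -> K}.

Section Quantum.
Variables (K : numClosedFieldType) (p n : nat).

Local Notation basis := (fvec p n).
(* vectors of C^{p^n} and operators (matrices indexed by basis x basis,
   entry (y,x) = <y|A|x>) *)
Local Notation qvec := (qvec K p n).
Local Notation qop := (qop K p n).

Definition opmul (A B : qop) : qop :=
  [ffun yx : basis * basis => \sum_(z : basis) A (yx.1, z) * B (z, yx.2)].
Definition opadj (A : qop) : qop :=
  [ffun yx : basis * basis => (A (yx.2, yx.1))^*].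
Definition opid : qop := [ffun yx : basis * basis => (yx.1 == yx.2)%:R].
Definition opscale (c : K) (A : qop) : qop := [ffun yx => c * A yx].
Definition vscale (c : K) (v : qvec) : qvec := [ffun y => c * v y].
Definition opapply (A : qop) (v : qvec) : qvec :=
  [ffun y => \sum_(x : basis) A (y, x) * v x].
Definition ketbra (phi : qvec) : qop :=
  [ffun yx : basis * basis => phi yx.1 * (phi yx.2)^*].

(* xi = e^{2 pi i / p} = (e^{i pi / p})^2, where p.-root (-1) is the p-th
   root of -1 of minimal non-negative argument, i.e. e^{i pi/p}. *)
Definition xi : K := (p.-root (-1)) ^+ 2.

(* E_(a,b) = (x)_j X(a_j) Z(b_j), with X(a)|x> = |x+a>, Z(b)|x> = xi^{bx}|x>;
   its matrix entry at (y,x) is [y = x + a] * xi^{sum_j b_j x_j}. *)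
Definition Eop (y : svec p n) : qop :=
  [ffun yx : basis * basis =>
     (yx.1 == [ffun j => yx.2 j + y.1 j])%:R *
     xi ^+ (\sum_j (nat_of_ord (y.2 j) * nat_of_ord (yx.2 j)))%N].

(* S = group generated by the scalars xi^l I and the E_y, y in C.
   (All generators have finite order, so the generated monoid is the
   generated group.) *)
Inductive stab (C : {set svec p n}) : qop -> Prop :=
| stab_scalar (l : nat) : stab C (opscale (xi ^+ l) opid)
| stab_gen (y : svec p n) : y \in C -> stab C (Eop y)
| stab_mul (A B : qop) : stab C A -> stab C B -> stab C (opmul A B).

Definition stab_character (C : {set svec p n}) (lam : qop -> K) : Prop :=
  (forall A B, stab C A -> stab C B -> lam (opmul A B) = lam A * lam B) /\
  lam (opscale xi opid) = xi.

Definition stab_code (C : {set svec p n}) (lam : qop -> K) (v : qvec) : Prop :=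
  forall A, stab C A -> opapply A v = vscale (lam A) v.

(* Gamma^I = (x)_{j in I} Gamma on qudit j, identity elsewhere;
   written out: p^{-2|I|} sum over (a,b) supported in I of E_(a,b) rho E_(a,b)^dag *)
Definition GammaI (I : {set 'I_n}) (rho : qop) : qop :=
  opscale ((p%:R : K) ^+ (2 * #|I|))^-1
    (\sum_(y : svec p n | ssupp y \subset I) opmul (opmul (Eop y) rho) (opadj (Eop y))).

(* Operators acting only on the qudits of J: K_J (x) I.  A J-local operator
   is given by k, only its values on configurations supported in J matter. *)
Definition padJ (J : {set 'I_n}) (x : basis) : basis :=
  [ffun j => if j \in J then x j else 0].
Definition agree_off (J : {set 'I_n}) (y x : basis) : bool :=
  [forall j, (j \notin J) ==> (y j == x j)].
Definition liftJ (J : {set 'I_n}) (k : qop) : qop :=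
  [ffun yx : basis * basis =>
     if agree_off J yx.1 yx.2 then k (padJ J yx.1, padJ J yx.2) else 0].

(* A trace-preserving quantum operation acting only on the qudits of J,
   in Kraus form R(rho) = sum_k (K_k (x) I) rho (K_k (x) I)^dag with
   sum_k (K_k (x) I)^dag (K_k (x) I) = identity. *)
Definition kraus_apply (J : {set 'I_n}) (ks : seq qop) (rho : qop) : qop :=
  \sum_(k <- ks) opmul (opmul (liftJ J k) rho) (opadj (liftJ J k)).
Definition kraus_TP (J : {set 'I_n}) (ks : seq qop) : Prop :=
  \sum_(k <- ks) opmul (opadj (liftJ J k)) (liftJ J k) = opid.

Definition locally_recoverable (Q : qvec -> Prop) (I J : {set 'I_n}) : Prop :=
  [/\ I != set0, I \proper J &
      exists ks : seq qop, kraus_TP J ks /\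
        forall phi : qvec, Q phi ->
          kraus_apply J ks (GammaI I (ketbra phi)) = ketbra phi].

End Quantum.

From Pilot Require Import Defs.
From HB Require Import structures.
From mathcomp Require Import all_boot all_order all_algebra.
From mathcomp Require Import ring.
Set Implicit Arguments. Unset Strict Implicit. Unset Printing Implicit Defensive.
Import Order.TTheory GRing.Theory Num.Theory.
Local Open Scope ring_scope.

(* If y is in the symplectic dual of C and vanishes on J \ I, write y = w + o with w = y|_I
   and o supported outside J.  Gamma^I (|phi><phi|) is a positive combination of the
   E_a |phi><phi| E_a^dag with supp a in I, so exact recovery forces every K_k E_a phi to be a
   multiple of phi, and some of them to be nonzero.  Comparing the recoveries of phi and of
   E_y phi (also in Q(C)), and using that the J-local Kraus operators commute with E_o,
   gives E_o phi ~ E_y phi = E_o E_w phi; hence E_w acts as a scalar on Q(C).  A Weyl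
   operator E_w that is scalar on Q(C) has w in C: otherwise tr (E_w P) = 0 for the
   stabilizer projector P, which makes the scalar vanish although E_w is invertible.
   The other inclusion only uses C in its dual. *)

Section Phase.
Variables (K : numClosedFieldType) (p : nat).
Hypothesis p_pr : prime p.
Local Notation xi := (xi K p).

Lemma xi_order : xi ^+ p = 1.
Proof.
rewrite /Defs.xi -exprM mulnC exprM rootCK ?prime_gt0 //.
by rewrite expr2 mulrNN mulr1.
Qed.

Lemma xi_neq0 : xi != 0.
Proof.
apply/eqP => xi0; have := xi_order; rewrite xi0 expr0n gtn_eqF ?prime_gt0 //.
by move/eqP; rewrite eq_sym oner_eq0.
Qed.

Lemma xi_neq1 : xi != 1.
Proof.
rewrite /Defs.xi; set r := p.-root (-1).
have rp : r ^+ p = -1 by rewrite rootCK ?prime_gt0.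
apply/eqP => r2; have : (r - 1) * (r + 1) = 0 by rewrite -subr_sqr r2 expr1n subrr.
move/eqP; rewrite mulf_eq0 subr_eq0 addr_eq0 => /orP[/eqP r1 | /eqP rN1].
  move: rp; rewrite r1 expr1n => /eqP; rewrite -subr_eq0 opprK -mulr2n.
  by rewrite pnatr_eq0.
by have := rootC_lt0 (-1 : K) (prime_gt1 p_pr); rewrite -/r rN1 oppr_lt0 ltr01.
Qed.

Definition phase (t : 'F_p) : K := xi ^+ t.

Lemma phase_natr m : phase m%:R = xi ^+ m.
Proof. by rewrite /phase val_Fp_nat // expr_mod // xi_order. Qed.

Lemma phaseD s t : phase (s + t) = phase s * phase t.
Proof. by rewrite -[s]natr_Zp -[t]natr_Zp -natrD !phase_natr exprD. Qed.

Lemma phase0 : phase 0 = 1.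
Proof. exact: expr0. Qed.

Lemma phase1 : phase 1 = xi.
Proof. by rewrite -[1]/(1%:R) phase_natr expr1. Qed.

Lemma phase_neq0 t : phase t != 0.
Proof. by rewrite expf_neq0 // xi_neq0. Qed.

End Phase.

Lemma sum_delta (R : nzRingType) (T : finType) (F : T -> R) c :
  \sum_z (z == c)%:R * F z = F c.
Proof.
rewrite (bigD1 c) //= eqxx mul1r big1 ?addr0 // => z /negbTE ->.
by rewrite mul0r.
Qed.

Section Operators.
Variables (K : numClosedFieldType) (p n : nat).
Local Notation basis := (fvec p n).
Local Notation qop := (qop K p n).
Local Notation qvec := (qvec K p n).
Local Notation opid := (opid K p n).

Lemma opmulE (A B : qop) y x : opmul A B (y, x) = \sum_z A (y, z) * B (z, x).
Proof. by rewrite ffunE. Qed.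

Lemma opapplyE (A : qop) v y : opapply A v y = \sum_x A (y, x) * v x.
Proof. by rewrite ffunE. Qed.

Lemma opmulA (A B C : qop) : opmul (opmul A B) C = opmul A (opmul B C).
Proof.
apply/ffunP => -[y x]; rewrite !opmulE.
under eq_bigr => z _ do rewrite opmulE mulr_suml.
rewrite exchange_big; apply: eq_bigr => z _ /=.
by rewrite opmulE mulr_sumr; apply: eq_bigr => w _; rewrite mulrA.
Qed.

Lemma opapplyM (A B : qop) v : opapply (opmul A B) v = opapply A (opapply B v).
Proof.
apply/ffunP => y; rewrite !opapplyE.
under eq_bigr => z _ do rewrite opmulE mulr_suml.
rewrite exchange_big; apply: eq_bigr => z _ /=.
by rewrite opapplyE mulr_sumr; apply: eq_bigr => w _; rewrite mulrA.
Qed.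

Lemma opmul1l : left_id opid (@opmul K p n).
Proof.
move=> A; apply/ffunP => -[y x]; rewrite opmulE.
by under eq_bigr => z _ do rewrite ffunE /= eq_sym; rewrite sum_delta.
Qed.

Lemma opmul1r : right_id opid (@opmul K p n).
Proof.
move=> A; apply/ffunP => -[y x]; rewrite opmulE.
by under eq_bigr => z _ do rewrite ffunE /= mulrC; rewrite sum_delta.
Qed.

Lemma opscale1 (A : qop) : opscale 1 A = A.
Proof. by apply/ffunP => yx; rewrite ffunE mul1r. Qed.

Lemma opscaleM c d (A : qop) : opscale c (opscale d A) = opscale (c * d) A.
Proof. by apply/ffunP => yx; rewrite !ffunE mulrA. Qed.

Lemma opmulZl c (A B : qop) : opmul (opscale c A) B = opscale c (opmul A B).
Proof.
apply/ffunP => -[y x]; rewrite [RHS]ffunE !opmulE mulr_sumr.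
by apply: eq_bigr => z _; rewrite ffunE mulrA.
Qed.

Lemma opmulZr c (A B : qop) : opmul A (opscale c B) = opscale c (opmul A B).
Proof.
apply/ffunP => -[y x]; rewrite [RHS]ffunE !opmulE mulr_sumr.
by apply: eq_bigr => z _; rewrite ffunE mulrCA.
Qed.

Lemma opscaleE c (A : qop) : opscale c A = opmul (opscale c opid) A.
Proof. by rewrite opmulZl opmul1l. Qed.

Lemma vscale1 (v : qvec) : vscale 1 v = v.
Proof. by apply/ffunP => y; rewrite !ffunE mul1r. Qed.

Lemma vscale0 (v : qvec) : vscale 0 v = 0.
Proof. by apply/ffunP => y; rewrite !ffunE mul0r. Qed.

Lemma vscaleM c d (v : qvec) : vscale c (vscale d v) = vscale (c * d) v.
Proof. by apply/ffunP => y; rewrite !ffunE mulrA. Qed.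

Lemma vscaleK (d : K) : d != 0 -> cancel (@vscale K p n d) (vscale d^-1).
Proof. by move=> d_neq0 v; rewrite vscaleM mulVf // vscale1. Qed.

Lemma opapplyZ c (A : qop) v : opapply (opscale c A) v = vscale c (opapply A v).
Proof.
apply/ffunP => y; rewrite !ffunE mulr_sumr; apply: eq_bigr => x _.
by rewrite ffunE mulrA.
Qed.

Lemma opapply_vscale c (A : qop) v : opapply A (vscale c v) = vscale c (opapply A v).
Proof.
apply/ffunP => y; rewrite !ffunE mulr_sumr; apply: eq_bigr => x _.
by rewrite ffunE mulrCA.
Qed.

Lemma opapplyD (A : qop) v w : opapply A (v + w) = opapply A v + opapply A w.
Proof.
apply/ffunP => y; rewrite !ffunE -big_split; apply: eq_bigr => x _.
by rewrite ffunE mulrDr.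
Qed.

Lemma opapply0 (A : qop) : opapply A 0 = 0.
Proof. by apply/ffunP => y; rewrite !ffunE big1 // => x _; rewrite ffunE mulr0. Qed.

Lemma opmulDl (A : qop) : {morph (@opmul K p n)^~ A : B C / B + C}.
Proof.
move=> B C; apply/ffunP => -[y x]; rewrite opmulE [RHS]ffunE !opmulE -big_split.
by apply: eq_bigr => z _; rewrite ffunE mulrDl.
Qed.

Lemma opmulDr (A : qop) : {morph @opmul K p n A : B C / B + C}.
Proof.
move=> B C; apply/ffunP => -[y x]; rewrite opmulE [RHS]ffunE !opmulE -big_split.
by apply: eq_bigr => z _; rewrite ffunE mulrDr.
Qed.

Lemma opmul0l (A : qop) : opmul 0 A = 0.
Proof. by apply/ffunP => -[y x]; rewrite opmulE ffunE big1 // => z _; rewrite ffunE mul0r. Qed.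

Lemma opmul0r (A : qop) : opmul A 0 = 0.
Proof. by apply/ffunP => -[y x]; rewrite opmulE ffunE big1 // => z _; rewrite ffunE mulr0. Qed.

Lemma opmul_suml (T : Type) (r : seq T) (P : pred T) (F : T -> qop) A :
  opmul (\sum_(i <- r | P i) F i) A = \sum_(i <- r | P i) opmul (F i) A.
Proof. exact: (big_morph _ (opmulDl A) (opmul0l A)). Qed.

Lemma opmul_sumr (T : Type) (r : seq T) (P : pred T) (F : T -> qop) A :
  opmul A (\sum_(i <- r | P i) F i) = \sum_(i <- r | P i) opmul A (F i).
Proof. exact: (big_morph _ (opmulDr A) (opmul0r A)). Qed.

Lemma opscale_sum (T : Type) (r : seq T) (P : pred T) (F : T -> qop) c :
  opscale c (\sum_(i <- r | P i) F i) = \sum_(i <- r | P i) opscale c (F i).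
Proof.
by apply: (big_morph _ _ _) => [A B|]; apply/ffunP => yx; rewrite !ffunE ?mulrDr ?mulr0.
Qed.

Definition optrace (A : qop) : K := \sum_x A (x, x).

Lemma optrace_sum (T : Type) (r : seq T) (P : pred T) (F : T -> qop) :
  optrace (\sum_(i <- r | P i) F i) = \sum_(i <- r | P i) optrace (F i).
Proof.
apply: (big_morph _ _ _) => [A B|]; rewrite /optrace.
  by rewrite -big_split; apply: eq_bigr => x _; rewrite ffunE.
by rewrite big1 // => x _; rewrite ffunE.
Qed.

Lemma optraceZ c A : optrace (opscale c A) = c * optrace A.
Proof. by rewrite /optrace mulr_sumr; apply: eq_bigr => x _; rewrite ffunE. Qed.

Lemma optrace1 : optrace opid = #|{: basis}|%:R.
Proof.
by rewrite /optrace; under eq_bigr => x _ do rewrite ffunE /= eqxx; rewrite sumr_const.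
Qed.

Definition basis_vec (x : basis) : qvec := [ffun z => (z == x)%:R].

Lemma opapply_basis_vec (A : qop) x y : opapply A (basis_vec x) y = A (y, x).
Proof.
rewrite opapplyE; under eq_bigr => z _ do rewrite ffunE mulrC.
by rewrite sum_delta.
Qed.

Lemma opapply_inj (A B : qop) : (forall v, opapply A v = opapply B v) -> A = B.
Proof.
move=> eqAB; apply/ffunP => -[y x].
by rewrite -!opapply_basis_vec eqAB.
Qed.

Lemma qvec_neq0P (v : qvec) : reflect (exists x, v x != 0) (v != 0).
Proof.
apply: (iffP idP) => [v_neq0 | [x]]; last by apply: contraNneq => ->; rewrite ffunE.
apply/existsP; apply: contraNT v_neq0 => /existsPn v0.
by apply/eqP/ffunP => x; rewrite ffunE; apply/eqP/negbNE.
Qed.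

Lemma ketbra0 : ketbra (0 : qvec) = 0.
Proof. by apply/ffunP => yx; rewrite !ffunE mul0r. Qed.

Lemma ketbra_conj (A : qop) phi :
  opmul (opmul A (ketbra phi)) (opadj A) = ketbra (opapply A phi).
Proof.
apply/ffunP => -[y x]; rewrite opmulE [RHS]ffunE /= !opapplyE rmorph_sum mulr_sumr.
apply: eq_bigr => z _; rewrite opmulE rmorphM !mulr_suml; apply: eq_bigr => w _.
by rewrite !ffunE /=; ring.
Qed.

End Operators.

Arguments basis_vec {K p n}.

Section Proportionality.
Variables (K : numClosedFieldType) (p n : nat).
Local Notation qop := (qop K p n).
Local Notation qvec := (qvec K p n).

Definition vpair (f v : qvec) : K := \sum_y f y * v y.

Definition opform (f : qvec) (A : qop) : K := \sum_y \sum_x f y * A (y, x) * (f x)^*.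

Lemma vpair_minor (phi v : qvec) x y :
  vpair [ffun z => (z == y)%:R * phi x - (z == x)%:R * phi y] v = phi x * v y - phi y * v x.
Proof.
rewrite /vpair; under eq_bigr => z _ do rewrite ffunE mulrBl -!mulrA.
by rewrite sumrB !sum_delta.
Qed.

(* Test [u] against the 2x2 minors [phi x * v y - phi y * v x], which all vanish at [phi]. *)
Lemma proportional_of_annihilators (u phi : qvec) :
  phi != 0 -> (forall f, vpair f phi = 0 -> vpair f u = 0) ->
  exists t, u = vscale t phi.
Proof.
case/qvec_neq0P => x phix_neq0 ann; exists (u x / phi x).
apply/ffunP => y; rewrite ffunE.
have /eqP : vpair [ffun z => (z == y)%:R * phi x - (z == x)%:R * phi y] u = 0.
  by apply: ann; rewrite vpair_minor mulrC subrr.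
rewrite vpair_minor subr_eq0 => /eqP minor0.
by apply: (mulfI phix_neq0); rewrite minor0; field.
Qed.

Lemma opform_ketbra f u : opform f (ketbra u) = vpair f u * (vpair f u)^*.
Proof.
rewrite /opform /vpair rmorph_sum mulr_suml; apply: eq_bigr => y _.
rewrite mulr_sumr; apply: eq_bigr => x _.
by rewrite ffunE rmorphM /=; ring.
Qed.

Lemma opformZ f c A : opform f (opscale c A) = c * opform f A.
Proof.
rewrite /opform mulr_sumr; apply: eq_bigr => y _; rewrite mulr_sumr.
by apply: eq_bigr => x _; rewrite ffunE; ring.
Qed.

Lemma opform_sum f (T : Type) (r : seq T) (P : pred T) (F : T -> qop) :
  opform f (\sum_(i <- r | P i) F i) = \sum_(i <- r | P i) opform f (F i).
Proof.
apply: (big_morph _ _ _) => [A B|]; rewrite /opform.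
  rewrite -big_split; apply: eq_bigr => y _; rewrite -big_split.
  by apply: eq_bigr => x _; rewrite ffunE /=; ring.
by rewrite big1 // => y _; rewrite big1 // => x _; rewrite ffunE mulr0 mul0r.
Qed.

Lemma ketbra_sum_proportional (T : eqType) (r : seq T) (u : T -> qvec) c phi :
  c != 0 -> phi != 0 -> opscale c (\sum_(i <- r) ketbra (u i)) = ketbra phi ->
  (forall i, i \in r -> exists t, u i = vscale t phi) /\
  (exists2 i, i \in r & u i != 0).
Proof.
move=> c_neq0 phi_neq0 decomp; split=> [i ri | ].
  apply: proportional_of_annihilators phi_neq0 _ => f fphi0.
  have /eqP := congr1 (opform f) decomp.
  rewrite opformZ opform_sum opform_ketbra fphi0 mul0r mulf_eq0 (negbTE c_neq0) /=.
  under eq_bigr => j _ do rewrite opform_ketbra.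
  rewrite psumr_eq0 => [/allP/(_ i ri)/=|j _]; last exact: mul_conjC_ge0.
  by rewrite mul_conjC_eq0 => /eqP.
have [x phix_neq0] := qvec_neq0P _ phi_neq0.
apply/hasP; apply: contraLR phix_neq0 => /hasPn u0; rewrite negbK -mul_conjC_eq0.
move: decomp; rewrite big_seq big1 => [/ffunP/(_ (x, x))|i /u0].
  by rewrite !ffunE mulr0 => <-.
by rewrite negbK => /eqP ->; rewrite ketbra0.
Qed.

Section CommonEigenvalue.
Variables (Q : qvec -> Prop) (phi0 : qvec).
Hypotheses (Q_add : forall v w, Q v -> Q w -> Q (v + w)) (Q_phi0 : Q phi0).
Hypothesis phi0_neq0 : phi0 != 0.

Lemma common_eigenvalue (A : qop) :
  (forall v, Q v -> exists t, opapply A v = vscale t v) ->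
  exists nu, forall v, Q v -> opapply A v = vscale nu v.
Proof.
move=> eigen; have [x phi0x_neq0] := qvec_neq0P _ phi0_neq0.
have [nu A_phi0] := eigen _ Q_phi0; exists nu => v Qv.
have [l A_v] := eigen _ Qv; have [l' A_sum] := eigen _ (Q_add Qv Q_phi0).
rewrite opapplyD A_v A_phi0 in A_sum.
have minor y : (l - l') * v y = (l' - nu) * phi0 y.
  move/ffunP/(_ y): A_sum; rewrite !ffunE => A_sum_y; apply/eqP; rewrite -subr_eq0.
  have -> : (l - l') * v y - (l' - nu) * phi0 y =
            l * v y + nu * phi0 y - l' * (v y + phi0 y) by ring.
  by rewrite A_sum_y subrr.
have [ll'|ll'] := eqVneq l l'.
  have := minor x; rewrite ll' subrr mul0r => /esym/eqP.
  by rewrite mulf_eq0 (negbTE phi0x_neq0) orbF subr_eq0 => /eqP <-; rewrite A_v ll'.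
have -> : v = vscale ((l' - nu) / (l - l')) phi0.
  apply/ffunP => y; rewrite ffunE mulrAC -minor mulrAC divff ?mul1r //.
  by rewrite subr_eq0.
by rewrite opapply_vscale A_phi0 !vscaleM mulrC.
Qed.

End CommonEigenvalue.

End Proportionality.

Section Codes.
Variables (p n : nat).
Local Notation svec := (svec p n).

Lemma szeroE : szero p n = 0.
Proof. by congr pair; apply/ffunP => j; rewrite !ffunE. Qed.

Lemma saddE (u v : svec) : sadd u v = u + v.
Proof. by congr pair; apply/ffunP => j; rewrite !ffunE. Qed.

Lemma sscaleN1 (u : svec) : sscale (-1) u = - u.
Proof. by congr pair; apply/ffunP => j; rewrite !ffunE mulN1r. Qed.

Lemma ssuppPn (y : svec) j : reflect (y.1 j = 0 /\ y.2 j = 0) (j \notin ssupp y).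
Proof. by rewrite inE negb_or !negbK; apply: (iffP andP) => -[/eqP ? /eqP ?]. Qed.

Lemma ssupp_sproj (R : {set 'I_n}) (y : svec) : ssupp (sproj R y) = R :&: ssupp y.
Proof. by apply/setP => j; rewrite !inE !ffunE; case: (j \in R). Qed.

Lemma ssuppB_sub (R : {set 'I_n}) (u v : svec) :
  ssupp u \subset R -> ssupp v \subset R -> ssupp (u - v) \subset R.
Proof.
move=> /subsetP uR /subsetP vR; apply/subsetP => j; apply: contraLR => jR.
have /ssuppPn[u1 u2] : j \notin ssupp u by apply: contra jR; apply: uR.
have /ssuppPn[v1 v2] : j \notin ssupp v by apply: contra jR; apply: vR.
by apply/ssuppPn; rewrite /= !ffunE u1 u2 v1 v2 subrr.
Qed.

Lemma sproj_sproj (R S : {set 'I_n}) (y : svec) :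
  R \subset S -> sproj R (sproj S y) = sproj R y.
Proof.
by move=> /subsetP sRS; congr pair; apply/ffunP => j; rewrite !ffunE; case: ifP => // /sRS ->.
Qed.

Lemma ssupp_sproj_subUC (R S : {set 'I_n}) (y : svec) :
  ssupp (sproj S y) \subset R -> ssupp y \subset R :|: ~: S.
Proof.
rewrite ssupp_sproj => /subsetP yS_R; apply/subsetP => j y_j; rewrite !inE orbC.
by case: (boolP (j \in S)) => //= jS; apply: yS_R; rewrite inE jS.
Qed.

Lemma sproj_split (R S : {set 'I_n}) (y : svec) :
  [disjoint R & S] -> ssupp y \subset R :|: S -> y = sproj R y + sproj S y.
Proof.
move=> dRS /subsetP sy.
have y0 j : j \notin R -> j \notin S -> y.1 j = 0 /\ y.2 j = 0.
  by move=> jR jS; apply/ssuppPn; apply: contra jR => /sy; rewrite inE (negbTE jS) orbF.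
apply: injective_projections; apply/ffunP => j; rewrite /= !ffunE.
all: have [jR|jR] := boolP (j \in R); first by rewrite (disjointFr dRS jR) addr0.
all: have [jS|jS] := boolP (j \in S); rewrite add0r //.
all: by have [y1 y2] := y0 j jR jS; rewrite ?y1 ?y2.
Qed.

Section LinearCode.
Variable C : {set svec}.
Hypothesis C_lin : linear_code C.

Lemma code0 : 0 \in C.
Proof. by case: C_lin; rewrite szeroE. Qed.

Lemma codeD u v : u \in C -> v \in C -> u + v \in C.
Proof. by case: C_lin => _ C_add _ /C_add Cv /Cv; rewrite saddE. Qed.

Lemma codeN u : u \in C -> - u \in C.
Proof. by case: C_lin => _ _ C_scale /(C_scale (-1)); rewrite sscaleN1. Qed.

Lemma codeDr u v : u \in C -> (u + v \in C) = (v \in C).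
Proof.
move=> Cu; apply/idP/idP => [Cuv|]; last exact: codeD.
by rewrite -(addKr u v); apply: codeD => //; apply: codeN.
Qed.

End LinearCode.

End Codes.

Section Weyl.
Variables (K : numClosedFieldType) (p n : nat).
Hypothesis p_pr : prime p.
Local Notation basis := (fvec p n).
Local Notation qop := (qop K p n).
Local Notation Eop := (@Eop K p n).
Local Notation phase := (@phase K p).
Local Notation opid := (opid K p n).

Definition fdot (b x : basis) : 'F_p := \sum_j b j * x j.

Lemma fdotDl b b' x : fdot (b + b') x = fdot b x + fdot b' x.
Proof. by rewrite /fdot -big_split; apply: eq_bigr => j _; rewrite ffunE mulrDl. Qed.

Lemma fdotDr b x x' : fdot b (x + x') = fdot b x + fdot b x'.
Proof. by rewrite /fdot -big_split; apply: eq_bigr => j _; rewrite ffunE mulrDr. Qed.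

Lemma EopE u y x : Eop u (y, x) = (y == x + u.1)%:R * phase (fdot u.2 x).
Proof.
rewrite ffunE /=; have -> : [ffun j => x j + u.1 j] = x + u.1.
  by apply/ffunP => j; rewrite !ffunE.
congr (_ * _); rewrite /fdot -phase_natr // natr_sum.
by congr phase; apply: eq_bigr => j _; rewrite natrM !natr_Zp.
Qed.

Lemma EopM u v : opmul (Eop u) (Eop v) = opscale (phase (fdot u.2 v.1)) (Eop (u + v)).
Proof.
apply/ffunP => -[y x]; rewrite opmulE ffunE EopE /=.
under eq_bigr => z _ do rewrite !EopE /= mulrCA -!mulrA.
rewrite sum_delta fdotDr fdotDl !phaseD // -addrA [v.1 + u.1]addrC; ring.
Qed.

Lemma Eop0 : Eop 0 = opid.
Proof.
apply/ffunP => -[y x]; rewrite EopE ffunE addr0 /=.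
by rewrite /fdot big1 ?phase0 ?mulr1 // => j _; rewrite ffunE mul0r.
Qed.

Lemma opapply_Eop u v :
  opapply (Eop u) v = [ffun y : basis => phase (fdot u.2 (y - u.1)) * v (y - u.1)].
Proof.
apply/ffunP => y; rewrite !ffunE.
under eq_bigr => x _ do rewrite EopE -subr_eq eq_sym -mulrA.
by rewrite sum_delta.
Qed.

Lemma opapply_Eop_inj u : injective (opapply (Eop u)).
Proof.
move=> v w /ffunP eq_vw; apply/ffunP => z; have := eq_vw (z + u.1).
by rewrite !opapply_Eop !ffunE addrK => /mulfI; apply; apply: phase_neq0.
Qed.

Lemma opapply_Eop_eq0 u v : (opapply (Eop u) v == 0) = (v == 0).
Proof. by rewrite -{1}(opapply0 (Eop u)) (inj_eq (@opapply_Eop_inj u)). Qed.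

(* For [u.1 = 0] the trace is a character sum over [F_p^n], invariant under
   multiplication by [xi]. *)
Lemma optrace_Eop u : u != 0 -> optrace (Eop u) = 0.
Proof.
move=> u_neq0; rewrite /optrace; under eq_bigr => x _ do rewrite EopE.
have [u1_0|u1_neq0] := eqVneq u.1 0; last first.
  rewrite big1 // => x _.
  by rewrite eq_sym -subr_eq0 addrAC subrr add0r (negbTE u1_neq0) mul0r.
under eq_bigr => x _ do rewrite u1_0 addr0 eqxx mul1r.
have [j u2j_neq0] : exists j, u.2 j != 0.
  apply/existsP; apply: contraNT u_neq0 => /existsPn u2_0.
  apply/eqP/injective_projections; first exact: u1_0.
  by apply/ffunP => j; rewrite ffunE; apply/eqP/negbNE/u2_0.
pose e : basis := [ffun i => if i == j then (u.2 j)^-1 else 0].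
have u2e : fdot u.2 e = 1.
  rewrite /fdot (bigD1 j) //= ffunE eqxx mulfV // big1 ?addr0 // => i /negbTE ij.
  by rewrite ffunE ij mulr0.
set S := \sum_x _; have : S = xi K p * S.
  rewrite {1}/S (reindex_inj (addIr e)) mulr_sumr; apply: eq_bigr => x _ /=.
  by rewrite fdotDr phaseD // u2e phase1 // mulrC.
move/eqP; rewrite -subr_eq0 -{1}[S]mul1r -mulrBl mulf_eq0 subr_eq0 eq_sym.
by rewrite (negbTE (xi_neq1 K p_pr)) => /eqP.
Qed.

Lemma Eop_commute u v : symp u v = 0 -> opmul (Eop u) (Eop v) = opmul (Eop v) (Eop u).
Proof.
rewrite !EopM addrC /symp sumrB => /eqP; rewrite subr_eq0 => /eqP uv.
by congr (opscale (phase _)); rewrite /fdot -uv; apply: eq_bigr => j _; rewrite mulrC.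
Qed.

Lemma Eop_disjointM u v : [disjoint ssupp u & ssupp v] ->
  opmul (Eop u) (Eop v) = Eop (u + v).
Proof.
move=> duv; rewrite EopM /fdot big1 ?phase0 ?opscale1 // => j _.
have [ju|ju] := boolP (j \in ssupp u).
  by have /ssuppPn[-> _] := disjointFr duv ju; rewrite mulr0.
by have /ssuppPn[_ ->] := ju; rewrite mul0r.
Qed.

Lemma liftJ_Eop_commute (J : {set 'I_n}) (k : qop) v : ssupp v \subset ~: J ->
  opmul (liftJ J k) (Eop v) = opmul (Eop v) (liftJ J k).
Proof.
move=> /subsetP vJ; have v0 j : j \in J -> v.1 j = 0 /\ v.2 j = 0.
  by move=> jJ; apply/ssuppPn; apply: contraL jJ => /vJ; rewrite inE.
apply/ffunP => -[y x]; rewrite !opmulE.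
under eq_bigr => z _ do rewrite EopE mulrCA.
rewrite sum_delta.
under eq_bigr => z _ do rewrite EopE -subr_eq eq_sym -mulrA.
rewrite sum_delta !ffunE /=.
have padD w : padJ J (w + v.1) = padJ J w.
  by apply/ffunP => j; rewrite !ffunE; case: ifP => // /v0[-> _]; rewrite addr0.
have padB w : padJ J (w - v.1) = padJ J w.
  by apply/ffunP => j; rewrite !ffunE; case: ifP => // /v0[-> _]; rewrite subr0.
have -> : agree_off J y (x + v.1) = agree_off J (y - v.1) x.
  by apply: eq_forallb => j; rewrite !ffunE subr_eq.
rewrite padD padB; case: ifP => [agree|]; last by rewrite mulr0 mul0r.
rewrite [RHS]mulrC; congr (_ * phase _); apply: eq_bigr => j _.
have [jJ|jJ] := boolP (j \in J); first by have [_ ->] := v0 j jJ; rewrite !mul0r.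
by move/forallP/(_ j): agree; rewrite jJ => /eqP <-.
Qed.

End Weyl.

Section Stabilizer.
Variables (K : numClosedFieldType) (p n : nat).
Hypothesis p_pr : prime p.
Local Notation basis := (fvec p n).
Local Notation svec := (svec p n).
Local Notation qop := (qop K p n).
Local Notation Eop := (@Eop K p n).
Local Notation phase := (@phase K p).
Local Notation opid := (opid K p n).
Local Notation xi := (xi K p).

Variables (C : {set svec}) (lam : qop -> K).
Hypotheses (C_lin : linear_code C) (lam_char : stab_character C lam).
Local Notation Q := (stab_code C lam).

Lemma lamM A B : stab C A -> stab C B -> lam (opmul A B) = lam A * lam B.
Proof. by case: lam_char => lamM _; apply: lamM. Qed.

Lemma lam1 : lam opid = 1.
Proof.
have := lamM (stab_scalar K C 1) (stab_scalar K C 0).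
rewrite expr0 opscale1 opmul1r expr1; case: lam_char => _ ->.
by rewrite -{1}[xi]mulr1 => /mulfI -> //; apply: xi_neq0.
Qed.

Lemma lam_scalar l : lam (opscale (xi ^+ l) opid) = xi ^+ l.
Proof.
elim: l => [|l IHl]; first by rewrite expr0 opscale1 lam1.
rewrite exprS -opscaleM opscaleE lamM ?IHl; last exact: stab_scalar.
  by case: lam_char => _ ->.
exact: (stab_scalar K C 1).
Qed.

Lemma lam_EopM u v : u \in C -> v \in C ->
  lam (Eop u) * lam (Eop v) = phase (fdot u.2 v.1) * lam (Eop (u + v)).
Proof.
move=> Cu Cv; have Cuv := codeD C_lin Cu Cv.
rewrite -lamM ?EopM //; try exact: stab_gen.
rewrite opscaleE lamM; [|exact: stab_scalar|exact: stab_gen].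
by rewrite lam_scalar.
Qed.

Lemma lam_Eop_neq0 u : u \in C -> lam (Eop u) != 0.
Proof.
move=> Cu; apply: contraPneq (lam_EopM Cu (codeN C_lin Cu)) => ->.
by rewrite mul0r subrr Eop0 // lam1 mulr1 => /esym/eqP; apply/negP/phase_neq0.
Qed.

Lemma sum_code_shift (F : svec -> qop) u : u \in C ->
  \sum_(v in C) F (u + v) = \sum_(v in C) F v.
Proof.
move=> Cu; rewrite [RHS](reindex (fun v => u + v)) /=.
  by apply: eq_bigl => v; rewrite codeDr.
by exists (fun w => - u + w) => w _; rewrite ?addKr ?addNKr.
Qed.

(* [stab_proj] is [#|C|] times the orthogonal projector onto [Q]. *)
Definition stab_proj : qop := \sum_(v in C) opscale (lam (Eop v))^-1 (Eop v).

Lemma Eop_stab_proj u : u \in C -> opmul (Eop u) stab_proj = opscale (lam (Eop u)) stab_proj.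
Proof.
move=> Cu; rewrite opmul_sumr opscale_sum.
rewrite -[RHS](sum_code_shift (fun w => opscale _ (opscale (lam (Eop w))^-1 (Eop w))) Cu).
apply: eq_bigr => v Cv; rewrite opmulZr EopM // !opscaleM; congr opscale.
have lam_v_neq0 := lam_Eop_neq0 Cv; have lam_uv_neq0 := lam_Eop_neq0 (codeD C_lin Cu Cv).
have -> : phase (fdot u.2 v.1) = lam (Eop u) * lam (Eop v) / lam (Eop (u + v)).
  by rewrite lam_EopM // mulfK.
by field; apply/andP.
Qed.

Lemma stab_stab_proj A : stab C A -> opmul A stab_proj = opscale (lam A) stab_proj.
Proof.
elim=> [l|u Cu|A' B stabA' IHA' stabB IHB].
- by rewrite opmulZl opmul1l lam_scalar.
- exact: Eop_stab_proj.
- by rewrite opmulA IHB opmulZr IHA' opscaleM lamM // mulrC.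
Qed.

Lemma stab_code_stab_proj v : Q (opapply stab_proj v).
Proof. by move=> A stabA; rewrite -opapplyM stab_stab_proj // opapplyZ. Qed.

Lemma optrace_stab_proj : optrace stab_proj = #|{: basis}|%:R.
Proof.
rewrite optrace_sum (bigD1 (0 : svec)) ?code0 //= big1 ?addr0 => [|v /andP[_ v_neq0]].
  by rewrite optraceZ Eop0 // lam1 invr1 mul1r optrace1.
by rewrite optraceZ optrace_Eop // mulr0.
Qed.

Lemma card_basis_neq0 : #|{: basis}|%:R != 0 :> K.
Proof. by rewrite pnatr_eq0 -lt0n; apply/card_gt0P; exists 0. Qed.

Lemma stab_code_neq0 : exists2 phi, Q phi & phi != 0.
Proof.
have [x Pxx_neq0] : exists x, stab_proj (x, x) != 0.
  apply/existsP; apply: contraNT card_basis_neq0 => /existsPn Pdiag0.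
  by rewrite -optrace_stab_proj /optrace big1 // => x _; apply/eqP/negbNE.
exists (opapply stab_proj (basis_vec x)); first exact: stab_code_stab_proj.
by apply/qvec_neq0P; exists x; rewrite opapply_basis_vec.
Qed.

Lemma optrace_Eop_stab_proj w : w \notin C -> optrace (opmul (Eop w) stab_proj) = 0.
Proof.
move=> notCw; rewrite opmul_sumr optrace_sum big1 // => v Cv.
rewrite opmulZr EopM // !optraceZ optrace_Eop ?mulr0 //.
apply: contra notCw => /eqP wv0; rewrite -[w](addrK v) wv0 sub0r.
exact: codeN.
Qed.

(* A scalar [E_w] on [Q] gives [tr (E_w P) = nu tr P]: the left side vanishes unless [w]
   is in [C], and [nu = 0] is impossible since [E_w] is invertible. *)
Lemma scalar_Eop_in_code w nu :
  (forall phi, Q phi -> opapply (Eop w) phi = vscale nu phi) -> w \in C.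
Proof.
move=> Ew_scalar; apply/negPn/negP => notCw.
have EwP : opmul (Eop w) stab_proj = opscale nu stab_proj.
  apply: opapply_inj => v.
  by rewrite opapplyM opapplyZ Ew_scalar //; apply: stab_code_stab_proj.
have /eqP := optrace_Eop_stab_proj notCw.
rewrite EwP optraceZ optrace_stab_proj mulf_eq0 (negbTE card_basis_neq0) orbF => /eqP nu0.
have [phi Qphi phi_neq0] := stab_code_neq0.
by move: (Ew_scalar _ Qphi) => /eqP; rewrite nu0 vscale0 opapply_Eop_eq0 // (negbTE phi_neq0).
Qed.

Lemma stab_commute_dual y A : y \in symp_dual C -> stab C A ->
  opmul A (Eop y) = opmul (Eop y) A.
Proof.
rewrite inE => /forall_inP y_dual; elim=> [l|u Cu|A' B _ IHA' _ IHB].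
- by rewrite opmulZl opmulZr opmul1l opmul1r.
- by apply: Eop_commute => //; apply/eqP/y_dual.
- by rewrite opmulA IHB -opmulA IHA' opmulA.
Qed.

Lemma stab_code_Eop y phi : y \in symp_dual C -> Q phi -> Q (opapply (Eop y) phi).
Proof.
move=> y_dual Qphi A stabA.
by rewrite -opapplyM stab_commute_dual // opapplyM Qphi // opapply_vscale.
Qed.

Lemma stab_codeD phi psi : Q phi -> Q psi -> Q (phi + psi).
Proof.
move=> Qphi Qpsi A stabA; rewrite opapplyD Qphi // Qpsi //.
by apply/ffunP => y; rewrite !ffunE mulrDr.
Qed.

End Stabilizer.

Section Recovery.
Variables (K : numClosedFieldType) (p n : nat).
Hypothesis p_pr : prime p.
Local Notation svec := (svec p n).
Local Notation qop := (qop K p n).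
Local Notation Eop := (@Eop K p n).
Variables (I J : {set 'I_n}) (ks : seq qop).

Definition recovery_errors : seq (qop * svec) :=
  [seq (k, a) | k <- ks, a <- [seq a <- index_enum svec | ssupp a \subset I]].

Lemma mem_recovery_errors k a :
  ((k, a) \in recovery_errors) = (k \in ks) && (ssupp a \subset I).
Proof.
apply/allpairsP/andP => [[[k' a'] [/= ks_k' + [-> ->]]]|[ks_k a_supp]].
  by rewrite mem_filter => /andP[].
by exists (k, a); rewrite mem_filter mem_index_enum andbT.
Qed.

Lemma kraus_GammaI_ketbra phi :
  kraus_apply J ks (GammaI I (ketbra phi)) =
  opscale ((p%:R : K) ^+ (2 * #|I|))^-1
    (\sum_(e <- recovery_errors) ketbra (opapply (liftJ J e.1) (opapply (Eop e.2) phi))).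
Proof.
rewrite /kraus_apply /GammaI big_allpairs [RHS]opscale_sum; apply: eq_bigr => k _.
rewrite opmulZr opmulZl big_filter opmul_sumr opmul_suml; congr opscale.
by apply: eq_bigr => a _; rewrite !ketbra_conj.
Qed.

(* The recovered state is a positive combination of the [|K_k E_a phi><K_k E_a phi|]. *)
Lemma recovered_errors_proportional phi : phi != 0 ->
  kraus_apply J ks (GammaI I (ketbra phi)) = ketbra phi ->
  (forall k a, k \in ks -> ssupp a \subset I ->
     exists t, opapply (liftJ J k) (opapply (Eop a) phi) = vscale t phi) /\
  (exists k a, [/\ k \in ks, ssupp a \subset I &
     opapply (liftJ J k) (opapply (Eop a) phi) != 0]).
Proof.
move=> phi_neq0; rewrite kraus_GammaI_ketbra => /ketbra_sum_proportional.
have c_neq0 : ((p%:R : K) ^+ (2 * #|I|))^-1 != 0.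
  by rewrite invr_eq0 expf_neq0 // pnatr_eq0 -lt0n prime_gt0.
case/(_ c_neq0 phi_neq0) => prop [[k a] + /= Kea_neq0].
rewrite mem_recovery_errors => /andP[ks_k a_supp]; split; last by exists k, a.
by move=> k' a' ks_k' a'_supp; apply: (prop (k', a')); rewrite mem_recovery_errors ks_k'.
Qed.

End Recovery.

Section LocalRecovery.
Variables (K : numClosedFieldType) (p n : nat).
Hypothesis p_pr : prime p.
Local Notation svec := (svec p n).
Local Notation qop := (qop K p n).
Local Notation Eop := (@Eop K p n).
Local Notation phase := (@phase K p).

Variables (C : {set svec}) (lam : qop -> K).
Hypotheses (C_lin : linear_code C) (lam_char : stab_character C lam).
Local Notation Q := (stab_code C lam).

Variables (I J : {set 'I_n}) (ks : seq qop).
Hypothesis subIJ : I \subset J.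
Hypothesis recover :
  forall phi, Q phi -> kraus_apply J ks (GammaI I (ketbra phi)) = ketbra phi.

Variable y : svec.
Hypotheses (y_dual : y \in symp_dual C) (y_supp : ssupp y \subset I :|: ~: J).
Local Notation w := (sproj I y).
Local Notation o := (sproj (~: J) y).

Lemma disjoint_ssupp_outside (b : svec) : ssupp b \subset J -> [disjoint ssupp o & ssupp b].
Proof.
move=> b_supp; rewrite disjoint_sym ssupp_sproj.
by apply: disjointWr (subsetIl _ _) _; rewrite -subsets_disjoint.
Qed.

Lemma sproj_split_outside : y = w + o.
Proof. by apply: sproj_split y_supp; rewrite -subsets_disjoint. Qed.

(* Apply the recovery to [phi] (error [b], nonzero outcome) and to [E_y phi] (error [b - w]):
   since [(b - w) + y = b + o] and [K_k] commutes with [E_o], both outcomes are multiples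
   of [E_o phi]. *)
Lemma Eop_outside_proportional phi : Q phi ->
  exists s, opapply (Eop o) phi = vscale s (opapply (Eop y) phi).
Proof.
move=> Qphi; have [->|phi_neq0] := eqVneq phi 0.
  by exists 0; rewrite !opapply0 vscale0.
have [prop_phi [k [b [ks_k b_supp Kb_neq0]]]] :=
  recovered_errors_proportional p_pr phi_neq0 (recover Qphi).
have [l Kb_phi] := prop_phi k b ks_k b_supp.
have l_neq0 : l != 0 by apply: contraNneq Kb_neq0 => l0; rewrite Kb_phi l0 vscale0.
pose psi := opapply (Eop y) phi.
have psi_neq0 : psi != 0 by rewrite opapply_Eop_eq0.
have a_supp : ssupp (b - w) \subset I by apply: ssuppB_sub; rewrite // ssupp_sproj subsetIl.
have [prop_psi _] := recovered_errors_proportional p_pr psi_neq0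
  (recover (stab_code_Eop p_pr y_dual Qphi)).
have [mu Ka_psi] := prop_psi k (b - w) ks_k a_supp.
pose c := phase (fdot (b - w).2 y.1) * l.
have c_neq0 : c != 0 by rewrite mulf_neq0 ?phase_neq0.
have : opapply (liftJ J k) (opapply (Eop (b - w)) psi) = vscale c (opapply (Eop o) phi).
  rewrite /psi -[opapply (Eop (b - w)) _]opapplyM EopM // opapplyZ opapply_vscale.
  have -> : b - w + y = o + b by rewrite {2}sproj_split_outside addrA subrK addrC.
  rewrite -Eop_disjointM ?disjoint_ssupp_outside ?(subset_trans b_supp) //.
  rewrite opapplyM -[opapply _ (opapply (Eop o) _)]opapplyM liftJ_Eop_commute //;
    last by rewrite ssupp_sproj subsetIl.
  by rewrite opapplyM Kb_phi opapply_vscale vscaleM.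
rewrite Ka_psi => Eo_phi; exists (c^-1 * mu).
by rewrite -vscaleM Eo_phi vscaleK.
Qed.

Lemma Eop_inside_eigen phi : Q phi -> exists t, opapply (Eop w) phi = vscale t phi.
Proof.
move=> Qphi; have [s Eo_phi] := Eop_outside_proportional Qphi.
have [->|phi_neq0] := eqVneq phi 0; first by exists 0; rewrite opapply0 vscale0.
have s_neq0 : s != 0.
  apply: contraNneq phi_neq0 => s0; move: Eo_phi.
  by rewrite s0 vscale0 => /eqP; rewrite opapply_Eop_eq0.
have : opapply (Eop o) phi = opapply (Eop o) (vscale s (opapply (Eop w) phi)).
  rewrite Eo_phi opapply_vscale -opapplyM Eop_disjointM 1?addrC -?sproj_split_outside //.
  by rewrite disjoint_ssupp_outside // ssupp_sproj (subset_trans (subsetIl I _) subIJ).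
move/(opapply_Eop_inj p_pr) => phi_eq; exists s^-1.
by rewrite {2}phi_eq vscaleK.
Qed.

Lemma sproj_inside_code : w \in C.
Proof.
have [phi0 Qphi0 phi0_neq0] := stab_code_neq0 p_pr C_lin lam_char.
have [nu Ew_scalar] := common_eigenvalue (stab_codeD (lam := lam)) Qphi0 phi0_neq0
  Eop_inside_eigen.
exact: scalar_Eop_in_code Ew_scalar.
Qed.

End LocalRecovery.

Theorem proposition17 (K : numClosedFieldType) (p n : nat)
    (C : {set svec p n}) (lam : qop K p n -> K) (I J : {set 'I_n}) :
  prime p ->
  linear_code C ->
  symp_self_orth C ->
  stab_character C lam ->
  I != set0 -> I \proper J -> J \proper [set: 'I_n] ->
  locally_recoverable (stab_code C lam) I J ->
  code_shorten I (code_puncture J (symp_dual C)) = code_shorten I C.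
Proof.
move=> p_pr C_lin C_so lam_char _ /properP[subIJ _] _ [_ _ [ks [_ recover]]].
apply/setP => z; apply/imsetP/imsetP => -[v + ->]; rewrite inE => /andP[].
- case/imsetP => y y_dual -> yJ_supp; exists (sproj I y); last by rewrite !sproj_sproj ?subxx.
  rewrite inE ssupp_sproj subsetIl andbT.
  exact: (sproj_inside_code p_pr C_lin lam_char subIJ recover y_dual
            (ssupp_sproj_subUC yJ_supp)).
- move=> Cv v_supp; exists (sproj J v); last by rewrite !sproj_sproj ?subxx.
  rewrite inE imset_f ?(subsetP C_so) //= ssupp_sproj.
  exact: subset_trans (subsetIr _ _) v_supp.
Qed.
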